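(* Let $D\subseteq(\omega+1)^\omega$ be a wide set. Then there are topological embeddings $\varphi:(\omega+1)^\omega\to D$ and $\psi:\omega^\omega\to P[D]$ such that $\psi\circ P=(P\restriction D)\circ\varphi$.
   Context: $(\omega+1)^\omega$ carries the product of the order topologies on $\omega+1$ (Cantor topology); $D$ carries the subspace topology; $\omega^\omega$ the usual Baire space topology and $P[D]\subseteq\omega^\omega$ the subspace topology. For $\tau\in(\omega+1)^{<\omega}$, $[\tau]=\{x:\tau\subseteq x\}$; for a tree $T\subseteq(\omega+1)^{<\omega}$, $\lim T=\{x:\forall n\ x\restriction n\in T\}$. $P:(\omega+1)^\omega\to\omega^\omega$ is given by $P(x)(n)=x(n)+1$ if $x(n)<\omega$, $P(x)(n)=0$ if $x(n)=\omega$. A tree $T$ is wide if every $\tau\in T$ has an extension $\tau'\in T$ such that $\lim T\cap[\tau']$ is nowhere dense (Cantor topology) in $\lim T\cap[\tau]$; a set is wide if it is $\lim T$ for a wide tree $T$. *)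

From Stdlib Require Import Arith List Lia.
Import ListNotations.

(* omega+1 is represented by [option nat]: [Some k] is k, [None] is omega. *)
Definition Om1 := option nat.
Definition Cantor := nat -> Om1.
Definition Baire := nat -> nat.

(* Basic neighbourhoods of a point a in omega+1 (order topology):
   {k} for a = k < omega, and (N-1, omega] = {omega} u {m | m >= N} for a = omega. *)
Definition nearOm1 (N : nat) (a b : Om1) : Prop :=
  match a with
  | Some k => b = Some k
  | None => b = None \/ exists m, N <= m /\ b = Some m
  end.

Definition nbC (x : Cantor) (nN : nat * nat) (y : Cantor) : Prop :=
  forall i, i < fst nN -> nearOm1 (snd nN) (x i) (y i).

Definition nbB (x : Baire) (n : nat) (y : Baire) : Prop :=
  forall i, i < n -> y i = x i.

Definition cont_on {X Y I J : Type} (nbX : X -> I -> X -> Prop)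
  (nbY : Y -> J -> Y -> Prop) (A : X -> Prop) (f : X -> Y) : Prop :=
  forall x, A x -> forall j, exists i, forall y, A y -> nbX x i y -> nbY (f x) j (f y).

Definition embedding {X Y I J : Type} (nbX : X -> I -> X -> Prop)
  (nbY : Y -> J -> Y -> Prop) (A : X -> Prop) (B : Y -> Prop) (f : X -> Y) : Prop :=
  (forall x, A x -> B (f x)) /\
  (forall x y, A x -> A y -> f x = f y -> x = y) /\
  cont_on nbX nbY A f /\
  (forall x, A x -> forall i, exists j, forall y, A y -> nbY (f x) j (f y) -> nbX x i y).

Definition P (x : Cantor) : Baire :=
  fun n => match x n with Some k => S k | None => 0 end.

Definition imageP (D : Cantor -> Prop) (z : Baire) : Prop :=
  exists x, D x /\ P x = z.

Definition restr (x : Cantor) (n : nat) : list Om1 := map x (seq 0 n).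

Definition cone (tau : list Om1) (x : Cantor) : Prop :=
  restr x (length tau) = tau.

Definition is_tree (T : list Om1 -> Prop) : Prop :=
  T [] /\
  (forall s t, T (s ++ t) -> T s) /\
  (forall s, T s -> exists a, T (s ++ [a])).

Definition lim (T : list Om1 -> Prop) (x : Cantor) : Prop :=
  forall n, T (restr x n).

Definition closure_in (B A : Cantor -> Prop) (x : Cantor) : Prop :=
  B x /\ forall i, exists y, B y /\ A y /\ nbC x i y.

Definition interior_in (B C : Cantor -> Prop) (x : Cantor) : Prop :=
  B x /\ exists i, forall y, B y -> nbC x i y -> C y.

Definition nowhere_dense_in (B A : Cantor -> Prop) : Prop :=
  forall x, ~ interior_in B (closure_in B A) x.

Definition wide_tree (T : list Om1 -> Prop) : Prop :=
  is_tree T /\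
  forall tau, T tau -> exists t, T (tau ++ t) /\
    nowhere_dense_in (fun x => lim T x /\ cone tau x)
                     (fun x => lim T x /\ cone (tau ++ t) x).

Definition wide (D : Cantor -> Prop) : Prop :=
  exists T, wide_tree T /\ forall x, D x <-> lim T x.

From Stdlib Require Import Arith List Lia Classical ClassicalEpsilon FunctionalExtensionality.
Import ListNotations.

(* [phi x] is the limit of an increasing sequence of nodes of [T], obtained by reading [x]
   one coordinate at a time.  From a node [nu], the move [omega] leads to a fixed extension
   of [barrier nu = nu ++ t], whose cone is nowhere dense in the cone of [nu]; a finite move
   [m], read together with the next [m] coordinates truncated at [m], leads to a node that
   leaves the cone of [barrier nu] but is coordinatewise [threshold]-close to the node that
   the move [omega] followed by those truncated coordinates reaches.  Nowhere density makes
   such nodes exist, and the closeness makes [phi] continuous at [omega] moves.  The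
   thresholds grow so fast that distinct moves are told apart by exact values at the
   coordinate where they leave the barrier; hence [phi] is injective and, both for the
   product topology and for the topology of exact coordinates, continuous with a continuous
   inverse.  As [P] is a bijection, [psi := P o phi o P^-1] is the embedding of the Baire
   space. *)

Definition entry (s : list Om1) (i : nat) : Om1 := nth i s None.

Definition prefix (s u : list Om1) : Prop :=
  length s <= length u /\ forall i, i < length s -> entry s i = entry u i.

Definition differ (s u : list Om1) : Prop :=
  exists i, i < length s /\ i < length u /\ entry s i <> entry u i.

Lemma prefix_refl s : prefix s s.
Proof. split; auto. Qed.

Lemma prefix_trans s u w : prefix s u -> prefix u w -> prefix s w.
Proof.
  intros [Hsu Esu] [Huw Euw]; split; [lia|].
  intros i Hi; rewrite Esu by lia; apply Euw; lia.
Qed.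

Lemma prefix_app s t : prefix s (s ++ t).
Proof.
  split; [rewrite length_app; lia|].
  intros i Hi; unfold entry; rewrite app_nth1; auto.
Qed.

Lemma differ_sym s u : differ s u -> differ u s.
Proof. intros [i [H1 [H2 H3]]]; exists i; auto. Qed.

Lemma differ_prefix s u s' u' : differ s u -> prefix s s' -> prefix u u' -> differ s' u'.
Proof.
  intros [i [Hs [Hu Hne]]] [Hss' Es] [Huu' Eu].
  exists i; repeat split; try lia.
  rewrite <- Es, <- Eu by lia; auto.
Qed.

Lemma length_restr x n : length (restr x n) = n.
Proof. unfold restr; rewrite length_map, length_seq; auto. Qed.

Lemma entry_restr x n i : i < n -> entry (restr x n) i = x i.
Proof.
  intros Hi; unfold entry, restr.
  rewrite nth_indep with (d' := x 0) by (rewrite length_map, length_seq; auto).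
  rewrite map_nth, seq_nth by auto. auto.
Qed.

Lemma restr_of_entries x s : (forall i, i < length s -> x i = entry s i) -> restr x (length s) = s.
Proof.
  intros H. apply nth_ext with (d := None) (d' := None).
  - apply length_restr.
  - intros i Hi; rewrite length_restr in Hi.
    change (entry (restr x (length s)) i = entry s i). rewrite entry_restr; auto.
Qed.

Lemma cone_entry s x : cone s x -> forall i, i < length s -> x i = entry s i.
Proof. unfold cone; intros H i Hi; rewrite <- H, entry_restr; auto. Qed.

Lemma prefix_restr x n s : prefix s (restr x n) -> cone s x.
Proof.
  intros [Hl E]. rewrite length_restr in Hl. apply restr_of_entries.
  intros i Hi. rewrite E, entry_restr by lia. auto.
Qed.

Definition max_val (s : list Om1) : nat :=
  list_max (map (fun a => match a with Some k => k | None => 0 end) s).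

Lemma le_list_max l n : In n l -> n <= list_max l.
Proof.
  intros H. pose proof (proj1 (list_max_le l (list_max l)) (le_n _)) as Hall.
  rewrite Forall_forall in Hall. auto.
Qed.

Lemma entry_le_max_val s i k : entry s i = Some k -> k <= max_val s.
Proof.
  unfold entry; intros H. destruct (Nat.lt_ge_cases i (length s)) as [Hi|Hi].
  - apply le_list_max, in_map_iff. exists (Some k). split; auto. rewrite <- H. apply nth_In; auto.
  - rewrite nth_overflow in H by auto. discriminate.
Qed.

Lemma nearOm1_refl N a : nearOm1 N a a.
Proof. destruct a; simpl; auto. Qed.

Lemma nbC_refl x i : nbC x i x.
Proof. intros k _; apply nearOm1_refl. Qed.

Lemma differ_of_not_nearOm1 s u N :
  (exists i, i < length s /\ i < length u /\ ~ nearOm1 N (entry s i) (entry u i)) -> differ s u.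
Proof.
  intros [i [Hs [Hu Hn]]]. exists i. repeat split; auto.
  intros He. apply Hn. rewrite He. apply nearOm1_refl.
Qed.

Lemma nearOm1_mono N M a b : N <= M -> nearOm1 M a b -> nearOm1 N a b.
Proof.
  destruct a; simpl; auto.
  intros H [->|[k [Hk ->]]]; [left; auto | right; exists k; split; [lia|auto]].
Qed.

Lemma nearOm1_trans N M a b c : N <= M -> nearOm1 N a b -> nearOm1 M b c -> nearOm1 N a c.
Proof.
  intros HNM; destruct a as [k|]; simpl.
  - intros ->; simpl; auto.
  - intros [->|[k [Hk ->]]]; simpl.
    + intros [->|[j [Hj ->]]]; [left; auto| right; exists j; split; [lia|auto]].
    + intros ->; right; exists k; auto.
Qed.

Lemma not_nearOm1_of_separated M N a b c d :
  nearOm1 M a c -> nearOm1 M b d -> a <> b ->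
  (forall k, a = Some k -> k < M) -> (forall k, b = Some k -> k < M) -> M <= N ->
  ~ nearOm1 N c d.
Proof.
  intros H1 H2 Hab Ha Hb HMN.
  destruct a as [k|]; destruct b as [j|]; simpl in *.
  - subst. simpl. congruence.
  - specialize (Ha k eq_refl). subst. simpl.
    destruct H2 as [->|[h [Hh ->]]]; [discriminate|]. intro Heq; inversion Heq; lia.
  - specialize (Hb j eq_refl). subst.
    destruct H1 as [->|[h [Hh ->]]]; simpl.
    + intros [H|[h [Hh H]]]; [discriminate|inversion H; lia].
    + intro Heq; inversion Heq; lia.
  - congruence.
Qed.

Lemma nearOm1_of_near_common N M N' a b c : nearOm1 N a c -> nearOm1 M b c ->
  (forall k, a = Some k -> k < M) -> N' <= N -> nearOm1 N' a b.
Proof.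
  intros H1 H2 Ha HN. destruct a as [k|]; simpl in *.
  - specialize (Ha k eq_refl). subst c. destruct b as [j|]; simpl in H2.
    + congruence.
    + destruct H2 as [H2|[h [Hh H2]]]; [discriminate|]. inversion H2; lia.
  - destruct b as [j|]; simpl in H2; [|left; auto]. subst c.
    destruct H1 as [H1|[h [Hh H1]]]; [discriminate|]. inversion H1; subst.
    right; exists h; split; [lia|auto].
Qed.

Definition trunc (m : nat) (a : Om1) : Om1 :=
  match a with Some k => if k <? m then Some k else None | None => None end.

Lemma trunc_lt m a k : trunc m a = Some k -> k < m.
Proof. destruct a as [j|]; simpl; [|discriminate]. destruct (Nat.ltb_spec j m); congruence. Qed.

Lemma trunc_idem m a : trunc m (trunc m a) = trunc m a.
Proof.
  destruct a as [k|]; simpl; auto.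
  destruct (Nat.ltb_spec k m); simpl; auto. rewrite (proj2 (Nat.ltb_lt k m)); auto.
Qed.

Lemma trunc_of_nearOm1 N m a b : nearOm1 N a b -> m < N -> trunc m a = trunc m b.
Proof.
  intros H Hm. destruct a as [k|]; simpl in H.
  - subst; auto.
  - destruct H as [->|[h [Hh ->]]]; simpl; auto. destruct (Nat.ltb_spec h m); auto; lia.
Qed.

Lemma nearOm1_of_trunc N m a b : nearOm1 N a (trunc m b) -> N <= m -> nearOm1 N a b.
Proof.
  intros H Hm. destruct b as [j|]; simpl in H; auto.
  destruct (Nat.ltb_spec j m); auto.
  destruct a; simpl in *; [discriminate|]. right; exists j; split; [lia|auto].
Qed.

Lemma nearOm1_trunc N M m a b : nearOm1 M a b -> N <= M ->
  (forall k, a = Some k -> k < m) -> nearOm1 N a (trunc m b).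
Proof.
  intros H HNM Ha. destruct a as [k|]; simpl in *.
  - subst b. simpl. rewrite (proj2 (Nat.ltb_lt k m)); auto.
  - destruct H as [->|[h [Hh ->]]]; simpl; auto.
    destruct (Nat.ltb_spec h m); auto. right; exists h; split; [lia|auto].
Qed.

Definition shift (x : Cantor) : Cantor := fun i => x (S i).

Definition look (m : nat) (x : Cantor) : list Om1 := map (trunc m) (restr (shift x) m).

Definition of_list (v : list Om1) : Cantor := entry v.

Definition bounded_by (m : nat) (z : Cantor) : Prop := forall i k, z i = Some k -> k < m.

Lemma length_look m x : length (look m x) = m.
Proof. unfold look; rewrite length_map, length_restr; auto. Qed.

Lemma entry_map_trunc m v i : entry (map (trunc m) v) i = trunc m (entry v i).
Proof. unfold entry. change None with (trunc m None) at 1. apply map_nth. Qed.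

Lemma entry_look m x i : i < m -> entry (look m x) i = trunc m (x (S i)).
Proof. intros Hi. unfold look. rewrite entry_map_trunc, entry_restr; auto. Qed.

Lemma map_trunc_idem m v : map (trunc m) (map (trunc m) v) = map (trunc m) v.
Proof. rewrite map_map. apply map_ext. apply trunc_idem. Qed.

Lemma look_trunc m x : map (trunc m) (look m x) = look m x.
Proof. apply map_trunc_idem. Qed.

Lemma look_ext m x y :
  (forall i, i < m -> trunc m (x (S i)) = trunc m (y (S i))) -> look m x = look m y.
Proof.
  intros H. unfold look, restr. rewrite !map_map. apply map_ext_in. intros a Ha.
  apply in_seq in Ha. apply H. lia.
Qed.

Lemma bounded_of_list_trunc m v : bounded_by m (of_list (map (trunc m) v)).
Proof. intros i k. unfold of_list; rewrite entry_map_trunc; apply trunc_lt. Qed.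

Fixpoint words (alphabet : list Om1) (k : nat) : list (list Om1) :=
  match k with
  | 0 => [[]]
  | S k => flat_map (fun a => map (cons a) (words alphabet k)) alphabet
  end.

Lemma in_words alphabet k v :
  length v = k -> (forall a, In a v -> In a alphabet) -> In v (words alphabet k).
Proof.
  revert v; induction k; intros v Hl Ha; destruct v; simpl in *; try lia; auto.
  apply in_flat_map. exists o. split; auto. apply in_map. apply IHk; auto.
Qed.

Definition trunc_words (m : nat) := words (None :: map Some (seq 0 m)) m.

Lemma in_trunc_words m v : length v = m -> In (map (trunc m) v) (trunc_words m).
Proof.
  intros Hl. apply in_words; [rewrite length_map; auto|].
  intros a Ha. apply in_map_iff in Ha. destruct Ha as [b [<- _]].
  destruct b as [k|]; simpl; auto. destruct (Nat.ltb_spec k m); simpl; auto.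
  right. apply in_map. apply in_seq. lia.
Qed.

Section WideTree.

Variable T : list Om1 -> Prop.
Hypothesis HT : wide_tree T.

Lemma tree_nil : T [].
Proof. destruct HT as [[H _] _]; auto. Qed.

Lemma tree_app s t : T (s ++ t) -> T s.
Proof. destruct HT as [[_ [H _]] _]; apply H. Qed.

Lemma tree_prefix s u : T u -> prefix s u -> T s.
Proof.
  intros Hu [Hl Hp].
  assert (Hs : s = firstn (length s) u).
  { apply nth_ext with (d := None) (d' := None).
    - rewrite length_firstn; lia.
    - intros i Hi. change (entry s i = nth i (firstn (length s) u) None).
      rewrite nth_firstn. destruct (Nat.ltb_spec i (length s)); [|lia]. apply Hp; auto. }
  rewrite Hs. apply (tree_app _ (skipn (length s) u)). rewrite firstn_skipn; auto.
Qed.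

Definition next_val (s : list Om1) : Om1 := epsilon (inhabits None) (fun a => T (s ++ [a])).

Lemma next_val_spec s : T s -> T (s ++ [next_val s]).
Proof.
  intros Hs. unfold next_val. apply (epsilon_spec (inhabits None) (fun a => T (s ++ [a]))).
  destruct HT as [[_ [_ H]] _]. apply H; auto.
Qed.

Fixpoint grow (r : list Om1) (k : nat) : list Om1 :=
  match k with 0 => r | S k => grow r k ++ [next_val (grow r k)] end.

Definition branch (r : list Om1) : Cantor := fun i => entry (grow r (S i)) i.

Lemma grow_tree r k : T r -> T (grow r k).
Proof. intros Hr; induction k; simpl; auto. apply next_val_spec; auto. Qed.

Lemma length_grow r k : length (grow r k) = length r + k.
Proof. induction k; simpl; auto. rewrite length_app; simpl; lia. Qed.

Lemma grow_mono r k k' : k <= k' -> prefix (grow r k) (grow r k').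
Proof. induction 1; [apply prefix_refl|]. eapply prefix_trans; eauto. apply prefix_app. Qed.

Lemma branch_entry r k i : i < length (grow r k) -> branch r i = entry (grow r k) i.
Proof.
  intros Hi; unfold branch.
  destruct (Nat.le_ge_cases (S i) k) as [H|H]; apply (grow_mono r) in H; destruct H as [_ H].
  - apply H. rewrite length_grow; lia.
  - symmetry; apply H; auto.
Qed.

Lemma branch_lim r : T r -> lim T (branch r).
Proof.
  intros Hr n. apply tree_prefix with (u := grow r n); [apply grow_tree; auto|].
  split; [rewrite length_restr, length_grow; lia|].
  intros i Hi; rewrite length_restr in Hi. rewrite entry_restr by auto.
  apply branch_entry. rewrite length_grow; lia.
Qed.

Lemma branch_cone r : cone r (branch r).
Proof. apply restr_of_entries. intros i Hi. rewrite (branch_entry r 0); auto. Qed.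

Definition thin (nu t : list Om1) : Prop :=
  nowhere_dense_in (fun x => lim T x /\ cone nu x) (fun x => lim T x /\ cone (nu ++ t) x).

Definition escapes (nu t rho : list Om1) (N : nat) (e : list Om1) : Prop :=
  T e /\ length e = length rho /\ prefix nu e /\ ~ prefix (nu ++ t) e /\
  forall i, i < length rho -> nearOm1 N (entry rho i) (entry e i).

(** Near a branch through [rho] there is a branch of [cone nu] avoiding the closure of
    [cone (nu ++ t)]; its restriction to [length rho] escapes. *)
Lemma escape_exists nu t rho N :
  thin nu t -> T rho -> prefix (nu ++ t) rho -> exists e, escapes nu t rho N e.
Proof.
  intros Hthin Hrho Hpre.
  set (z := branch rho).
  assert (Hnu : prefix nu rho) by (eapply prefix_trans; [apply prefix_app|exact Hpre]).
  assert (Hz : cone rho z) by apply branch_cone.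
  assert (Hznu : cone nu z).
  { apply restr_of_entries. intros i Hi.
    rewrite (cone_entry _ _ Hz) by (destruct Hnu; lia). destruct Hnu as [_ H]; symmetry; auto. }
  assert (Hy : exists y, (lim T y /\ cone nu y) /\ nbC z (length rho, N) y /\
     ~ closure_in (fun x => lim T x /\ cone nu x) (fun x => lim T x /\ cone (nu ++ t) x) y).
  { apply NNPP; intro Hno. apply (Hthin z). split; [split; auto; apply branch_lim; auto|].
    exists (length rho, N). intros y By Hn. apply NNPP. intro Hc. apply Hno. exists y; auto. }
  destruct Hy as [y [[Hly Hcy] [Hnear Hncl]]].
  assert (Hnc : ~ cone (nu ++ t) y).
  { intro Hc. apply Hncl. split; [split; auto|]. intro i. exists y. repeat split; auto.
    apply nbC_refl. }
  exists (restr y (length rho)). repeat split.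
  - apply Hly.
  - apply length_restr.
  - rewrite length_restr; destruct Hnu; lia.
  - intros i Hi. rewrite entry_restr by (destruct Hnu; lia). symmetry; apply cone_entry; auto.
  - intros Hp. apply Hnc, (prefix_restr y (length rho)), Hp.
  - intros i Hi. rewrite entry_restr by auto. specialize (Hnear i Hi). simpl in Hnear.
    rewrite (cone_entry _ _ Hz i Hi) in Hnear. auto.
Qed.

Definition thin_ext (nu : list Om1) : list Om1 :=
  epsilon (inhabits []) (fun t => T (nu ++ t) /\ thin nu t).

Definition barrier (nu : list Om1) := nu ++ thin_ext nu.

Definition omega_child (nu : list Om1) := barrier nu ++ [next_val (barrier nu)].

Definition escape (nu rho : list Om1) (N : nat) : list Om1 :=
  epsilon (inhabits nu) (escapes nu (thin_ext nu) rho N).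

Lemma barrier_spec nu : T nu -> T (barrier nu) /\ thin nu (thin_ext nu).
Proof.
  intros Hnu. unfold barrier, thin_ext.
  apply (epsilon_spec (inhabits []) (fun t => T (nu ++ t) /\ thin nu t)).
  destruct HT as [_ H]. destruct (H nu Hnu) as [t [H1 H2]]. exists t; auto.
Qed.

Lemma escape_spec nu rho N : T nu -> T rho -> prefix (barrier nu) rho ->
  escapes nu (thin_ext nu) rho N (escape nu rho N).
Proof.
  intros Hnu Hrho Hpre. unfold escape. apply epsilon_spec.
  apply escape_exists; auto. apply barrier_spec; auto.
Qed.

Lemma prefix_barrier nu : prefix nu (barrier nu).
Proof. apply prefix_app. Qed.

Lemma prefix_barrier_omega_child nu : prefix (barrier nu) (omega_child nu).
Proof. apply prefix_app. Qed.

Lemma length_barrier_lt nu : length (barrier nu) < length (omega_child nu).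
Proof. unfold omega_child; rewrite length_app; simpl; lia. Qed.

Definition proper_ext (nu c : list Om1) : Prop := T c /\ prefix nu c /\ length nu < length c.

Lemma omega_child_spec nu : T nu -> proper_ext nu (omega_child nu).
Proof.
  intros H. split; [apply next_val_spec, barrier_spec; auto|split].
  - eapply prefix_trans; [apply prefix_barrier|apply prefix_barrier_omega_child].
  - pose proof (length_barrier_lt nu). unfold barrier in *. rewrite length_app in *. lia.
Qed.

Definition FinChildren := list Om1 -> nat -> list Om1 -> list Om1.

Definition child_with (F : FinChildren) (nu : list Om1) (x : Cantor) : list Om1 :=
  match x 0 with None => omega_child nu | Some m => F nu m (look m x) end.

Fixpoint run_with (F : FinChildren) (k : nat) (nu : list Om1) (x : Cantor) : list Om1 :=
  match k with 0 => nu | S k => run_with F k (child_with F nu x) (shift x) end.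

Definition target_with (F : FinChildren) nu m v :=
  run_with F m (omega_child nu) (of_list (map (trunc m) v)).

(** Exceeds [m] and every finite value occurring in the (finitely many, as [v] only matters
    up to [trunc m]) possible targets for [m] and children for [m' < m]. *)
Definition threshold_with (F : FinChildren) nu m :=
  S (m + list_max (map (fun v => max_val (target_with F nu m v)) (trunc_words m))
       + list_max (flat_map (fun m' => map (fun v => max_val (F nu m' v)) (trunc_words m'))
                            (seq 0 m))).

(** [fin_child] is defined by recursion on the move: [target_with F nu m] and
    [threshold_with F nu m] only use [F] below [m], so [fin_child_upto k] is correct on
    moves [m < k]. *)
Fixpoint fin_child_upto (k : nat) : FinChildren :=
  match k with
  | 0 => fun nu _ _ => nu
  | S k => fun nu m v =>
      if m <? k then fin_child_upto k nu m v
      else escape nu (target_with (fin_child_upto k) nu m v) (threshold_with (fin_child_upto k) nu m)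
  end.

Definition fin_child : FinChildren := fun nu m v => fin_child_upto (S m) nu m v.

Notation child := (child_with fin_child).
Notation run := (run_with fin_child).
Notation target := (target_with fin_child).
Notation threshold := (threshold_with fin_child).

Lemma fin_child_upto_agree k m nu v : m < k -> fin_child_upto k nu m v = fin_child nu m v.
Proof.
  revert m nu v; induction k; intros m nu v Hm; [lia|]. simpl.
  destruct (Nat.ltb_spec m k) as [H|H].
  - apply IHk; auto.
  - replace m with k by lia. unfold fin_child. simpl. rewrite Nat.ltb_irrefl. auto.
Qed.

Lemma run_with_ext F G m : (forall nu m' v, m' < m -> F nu m' v = G nu m' v) ->
  forall k nu z, bounded_by m z -> run_with F k nu z = run_with G k nu z.
Proof.
  intros Hag k. induction k; intros nu z Hb; simpl; auto.
  replace (child_with F nu z) with (child_with G nu z).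
  - apply IHk. intros i; apply (Hb (S i)).
  - unfold child_with. destruct (z 0) eqn:Hz; auto. symmetry; apply Hag, (Hb 0); auto.
Qed.

Lemma fin_child_eq nu m v : fin_child nu m v = escape nu (target nu m v) (threshold nu m).
Proof.
  unfold fin_child at 1. simpl. rewrite Nat.ltb_irrefl.
  assert (Hag : forall nu m' v, m' < m -> fin_child_upto m nu m' v = fin_child nu m' v)
    by (intros; apply fin_child_upto_agree; auto).
  assert (Ht : forall v, target_with (fin_child_upto m) nu m v = target nu m v).
  { intros w; apply (run_with_ext _ _ m); auto. apply bounded_of_list_trunc. }
  rewrite Ht. unfold threshold_with. do 4 f_equal.
  - f_equal. apply map_ext. intros w; rewrite Ht; auto.
  - rewrite !flat_map_concat_map. f_equal. apply map_ext_in. intros m' Hm'.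
    apply in_seq in Hm'. apply map_ext. intros w. rewrite Hag by lia. auto.
Qed.

Lemma target_trunc nu m v : target nu m (map (trunc m) v) = target nu m v.
Proof. unfold target_with. rewrite map_trunc_idem; auto. Qed.

Lemma fin_child_trunc nu m v : fin_child nu m (map (trunc m) v) = fin_child nu m v.
Proof. rewrite !fin_child_eq, target_trunc; auto. Qed.

Lemma max_val_target_lt nu m v : length v = m -> max_val (target nu m v) < threshold nu m.
Proof.
  intros Hl. rewrite <- target_trunc. unfold threshold_with.
  enough (max_val (target nu m (map (trunc m) v))
          <= list_max (map (fun v => max_val (target nu m v)) (trunc_words m))) by lia.
  apply le_list_max, in_map_iff. eexists; split; [reflexivity|]. apply in_trunc_words; auto.
Qed.

Lemma max_val_fin_child_lt nu m m' v :
  m' < m -> length v = m' -> max_val (fin_child nu m' v) < threshold nu m.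
Proof.
  intros Hm Hl. rewrite <- fin_child_trunc. unfold threshold_with.
  enough (max_val (fin_child nu m' (map (trunc m') v)) <=
     list_max (flat_map (fun m' => map (fun v => max_val (fin_child nu m' v)) (trunc_words m'))
                        (seq 0 m))) by lia.
  apply le_list_max, in_flat_map. exists m'. split; [apply in_seq; lia|].
  apply in_map_iff. eexists; split; [reflexivity|]. apply in_trunc_words; auto.
Qed.

Lemma lt_threshold nu m : m < threshold nu m.
Proof. unfold threshold, threshold_with; lia. Qed.

Definition fin_child_spec (nu : list Om1) (m : nat) (v : list Om1) : Prop :=
  T (target nu m v) /\ prefix (omega_child nu) (target nu m v) /\
  length (omega_child nu) + m <= length (target nu m v) /\
  escapes nu (thin_ext nu) (target nu m v) (threshold nu m) (fin_child nu m v).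

Definition run_spec (nu rho : list Om1) (k : nat) : Prop :=
  T rho /\ prefix nu rho /\ length nu + k <= length rho.

Lemma run_spec_S nu rho rho' k :
  proper_ext nu rho -> run_spec rho rho' k -> run_spec nu rho' (S k).
Proof.
  intros [_ [H1 H2]] [H3 [H4 H5]]. split; [auto|split; [eapply prefix_trans; eauto|lia]].
Qed.

Lemma child_spec_upto m nu x : T nu ->
  (forall m', m' < m -> forall nu v, T nu -> fin_child_spec nu m' v) ->
  (forall k, x 0 = Some k -> k < m) -> proper_ext nu (child nu x).
Proof.
  intros Hnu IH Hb. unfold child_with. destruct (x 0) as [m'|]; [|apply omega_child_spec; auto].
  pose proof (IH m' (Hb m' eq_refl) nu (look m' x) Hnu) as Hs.
  unfold fin_child_spec, escapes in Hs. destruct Hs as [_ [_ [Hl [He [Hle [Hpre _]]]]]].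
  destruct (omega_child_spec nu Hnu) as [_ [_ Ho]]. split; [auto|split; [auto|lia]].
Qed.

Lemma run_spec_upto m :
  (forall m', m' < m -> forall nu v, T nu -> fin_child_spec nu m' v) ->
  forall k nu z, T nu -> bounded_by m z -> run_spec nu (run k nu z) k.
Proof.
  intros IH k. induction k; intros nu z Hnu Hb; simpl.
  - split; auto. split; [apply prefix_refl| lia].
  - destruct (child_spec_upto m nu z Hnu IH (Hb 0)) as [Hc Hext].
    apply run_spec_S with (child nu z); [split; auto|]. apply IHk; auto. intros i; apply (Hb (S i)).
Qed.

Lemma fin_child_spec_all m nu v : T nu -> fin_child_spec nu m v.
Proof.
  revert nu v; induction m as [m IH] using lt_wf_ind. intros nu v Hnu.
  destruct (omega_child_spec nu Hnu) as [Ho _].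
  destruct (run_spec_upto m IH m _ _ Ho (bounded_of_list_trunc m v)) as [H1 [H2 H3]].
  split; [auto|split; [auto|split; [auto|]]].
  rewrite fin_child_eq. apply escape_spec; auto.
  eapply prefix_trans; [apply prefix_barrier_omega_child|exact H2].
Qed.

Lemma child_spec nu x : T nu -> proper_ext nu (child nu x).
Proof.
  intros Hnu. apply (child_spec_upto (S (match x 0 with Some k => k | None => 0 end))); auto.
  - intros; apply fin_child_spec_all; auto.
  - intros k ->; lia.
Qed.

Lemma run_spec_all k nu z : T nu -> run_spec nu (run k nu z) k.
Proof.
  revert nu z; induction k; intros nu z Hnu; simpl.
  - split; auto. split; [apply prefix_refl| lia].
  - apply run_spec_S with (child nu z); [apply child_spec|apply IHk, child_spec]; auto.
Qed.

Lemma run_prefix_mono nu x k k' : T nu -> k <= k' -> prefix (run k nu x) (run k' nu x).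
Proof.
  intros Hnu; induction 1; [apply prefix_refl|]. eapply prefix_trans; [eauto|].
  clear H IHle. revert nu x Hnu; induction m; intros nu x Hnu.
  - apply child_spec; auto.
  - apply IHm. apply child_spec; auto.
Qed.

Definition phi (nu : list Om1) (x : Cantor) : Cantor := fun i => entry (run (S i) nu x) i.

Lemma phi_run nu x k i : T nu -> i < length (run k nu x) -> phi nu x i = entry (run k nu x) i.
Proof.
  intros Hnu Hi. unfold phi.
  destruct (Nat.le_ge_cases (S i) k) as [H|H];
    destruct (run_prefix_mono nu x _ _ Hnu H) as [_ E].
  - apply E. destruct (run_spec_all (S i) nu x Hnu) as [_ [_ Hl]]. lia.
  - symmetry; apply E; auto.
Qed.

Lemma phi_child nu x i : T nu -> phi nu x i = phi (child nu x) (shift x) i.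
Proof.
  intros Hnu. destruct (child_spec nu x Hnu) as [Hc [_ Hlc]].
  rewrite (phi_run (child nu x) (shift x) i i Hc); [reflexivity|].
  destruct (run_spec_all i (child nu x) (shift x) Hc) as [_ [_ Hl]]. lia.
Qed.

Lemma phi_entry_child nu x i : T nu -> i < length (child nu x) -> phi nu x i = entry (child nu x) i.
Proof. intros Hnu Hi. rewrite (phi_run nu x 1); [reflexivity|auto|exact Hi]. Qed.

Lemma phi_lim x : lim T (phi [] x).
Proof.
  intros n. destruct (run_spec_all n [] x tree_nil) as [H1 [_ H3]].
  apply tree_prefix with (run n [] x); auto. split.
  - rewrite length_restr; simpl in H3; lia.
  - intros i Hi. rewrite length_restr in Hi. rewrite entry_restr by auto.
    apply phi_run; [apply tree_nil|]. simpl in H3; lia.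
Qed.

(** A finite move leaves [cone (barrier nu)] at a coordinate where [barrier nu] reads
    [omega]: being [threshold]-close to [omega] there, it reads a value [>= threshold]. *)
Lemma fin_child_escape_coord nu m v : T nu -> exists d, d < length (barrier nu) /\
  entry (omega_child nu) d = None /\ entry (target nu m v) d = None /\
  exists g, entry (fin_child nu m v) d = Some g /\ threshold nu m <= g.
Proof.
  intros Hnu.
  destruct (fin_child_spec_all m nu v Hnu) as [_ [[_ Ht] [Hl [_ [Hle [_ [Hout Hnear]]]]]]].
  change (~ prefix (barrier nu) (fin_child nu m v)) in Hout. pose proof (length_barrier_lt nu).
  assert (Hd : exists d, d < length (barrier nu) /\ entry (barrier nu) d <> entry (fin_child nu m v) d).
  { apply NNPP; intro Hno. apply Hout. split; [lia|]. intros i Hi.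
    apply NNPP; intro Hne. apply Hno; eauto. }
  destruct Hd as [d [Hd Hne]].
  destruct (prefix_barrier_omega_child nu) as [_ Hb].
  assert (Htd : entry (target nu m v) d = entry (barrier nu) d) by (rewrite Hb, Ht by lia; auto).
  specialize (Hnear d ltac:(lia)). rewrite Htd in Hnear.
  exists d. split; auto.
  destruct (entry (barrier nu) d) eqn:Ha; simpl in Hnear; [congruence|].
  split; [rewrite <- Hb; auto|split; auto].
  destruct Hnear as [Hn|[g [Hg Hn]]]; [congruence|]. exists g; auto.
Qed.

Lemma length_fin_child nu m v : T nu ->
  length (omega_child nu) + m <= length (fin_child nu m v) /\
  length (fin_child nu m v) = length (target nu m v).
Proof.
  intros Hnu. destruct (fin_child_spec_all m nu v Hnu) as [_ [_ [Hl [_ [Hle _]]]]]. split; lia.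
Qed.

Definition same_move (x y : Cantor) : Prop :=
  x 0 = y 0 /\ forall m, x 0 = Some m -> look m x = look m y.

Lemma child_same_move nu x y : same_move x y -> child nu y = child nu x.
Proof.
  intros [H0 Hl]. unfold child_with. rewrite <- H0. destruct (x 0); auto. rewrite Hl; auto.
Qed.

Lemma same_move_of_agree x y m : x 0 = Some m -> (forall i, i <= m -> y i = x i) -> same_move x y.
Proof.
  intros Hx Hy. split; [rewrite Hy; auto; lia|].
  intros k Hk. rewrite Hx in Hk. inversion Hk; subst k.
  apply look_ext. intros j Hj. rewrite Hy by lia. auto.
Qed.

(** At the coordinate where a finite move [f] leaves [cone (barrier nu)], every other move
    reads a different value: [omega] for the [omega] move, a value [< threshold nu f] for a
    smaller move, and [omega] or a value [>= threshold nu m] for a larger move [m]. *)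
Lemma fin_child_separated_other nu f v y : T nu -> length v = f -> y 0 <> Some f ->
  exists (d g : nat), d < length (fin_child nu f v) /\ d < length (child nu y) /\
    entry (fin_child nu f v) d = Some g /\ entry (child nu y) d <> Some g.
Proof.
  intros Hnu Hv Hy. destruct (fin_child_escape_coord nu f v Hnu) as [d [Hd [Ho [_ [g [Hg Hgt]]]]]].
  destruct (length_fin_child nu f v Hnu) as [Hl _]. pose proof (length_barrier_lt nu).
  exists d, g. split; [lia|]. unfold child_with.
  destruct (y 0) as [m|] eqn:Hy0; [|rewrite Ho; split; [lia|split; [auto|discriminate]]].
  destruct (length_fin_child nu m (look m y) Hnu) as [Hl' _].
  split; [lia|split; [auto|]].
  destruct (Nat.lt_total m f) as [Hmf|[Hmf|Hmf]]; [| congruence |].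
  - pose proof (max_val_fin_child_lt nu f m (look m y) Hmf (length_look m y)).
    intros He. apply entry_le_max_val in He. lia.
  - destruct (fin_child_spec_all m nu (look m y) Hnu) as [_ [[_ Ht] [Hlt [_ [_ [_ [_ Hnear]]]]]]].
    pose proof (max_val_fin_child_lt nu m f v Hmf Hv). apply entry_le_max_val in Hg.
    specialize (Hnear d ltac:(lia)). rewrite <- Ht, Ho in Hnear by lia.
    intros He. rewrite He in Hnear. destruct Hnear as [Hn|[h [Hh Hn]]]; [discriminate|].
    inversion Hn; lia.
Qed.

Definition targets_differ (m : nat) : Prop := forall nu v w, T nu ->
  length v = m -> length w = m -> map (trunc m) v <> map (trunc m) w ->
  differ (target nu m v) (target nu m w).

Lemma fin_child_far_same nu f v w N : T nu -> targets_differ f ->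
  length v = f -> length w = f -> map (trunc f) v <> map (trunc f) w -> threshold nu f <= N ->
  exists i, i < length (fin_child nu f v) /\ i < length (fin_child nu f w) /\
    ~ nearOm1 N (entry (fin_child nu f v) i) (entry (fin_child nu f w) i).
Proof.
  intros Hnu Hdiff Hv Hw Hne HN.
  destruct (Hdiff nu v w Hnu Hv Hw Hne) as [e [He1 [He2 He3]]].
  destruct (fin_child_spec_all f nu v Hnu) as [_ [_ [_ [_ [Hl1 [_ [_ Hn1]]]]]]].
  destruct (fin_child_spec_all f nu w Hnu) as [_ [_ [_ [_ [Hl2 [_ [_ Hn2]]]]]]].
  exists e. split; [lia|split; [lia|]].
  apply (not_nearOm1_of_separated (threshold nu f) N (entry (target nu f v) e) (entry (target nu f w) e));
    auto; intros k Hk; apply entry_le_max_val in Hk.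
  - pose proof (max_val_target_lt nu f v Hv). lia.
  - pose proof (max_val_target_lt nu f w Hw). lia.
Qed.

Lemma children_far nu x y f N : T nu -> x 0 = Some f -> targets_differ f -> ~ same_move x y ->
  threshold nu f <= N -> exists i, i < length (child nu x) /\ i < length (child nu y) /\
    ~ nearOm1 N (entry (child nu x) i) (entry (child nu y) i).
Proof.
  intros Hnu Hx Hdiff Hns HN.
  destruct (classic (y 0 = Some f)) as [Hy|Hy].
  - unfold child_with. rewrite Hx, Hy.
    apply fin_child_far_same; auto using length_look. rewrite !look_trunc.
    intros Heq. apply Hns. split; [congruence|]. intros k Hk. rewrite Hx in Hk. congruence.
  - destruct (fin_child_separated_other nu f (look f x) y Hnu (length_look f x) Hy)
      as [d [g [Hd1 [Hd2 [Hg Hne]]]]].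
    exists d. replace (child nu x) with (fin_child nu f (look f x)) by (unfold child_with; rewrite Hx; auto).
    rewrite Hg. simpl. auto.
Qed.

Lemma children_differ nu x y : T nu -> ~ same_move x y ->
  (forall m, x 0 = Some m -> targets_differ m) -> (forall m, y 0 = Some m -> targets_differ m) ->
  differ (child nu x) (child nu y).
Proof.
  intros Hnu Hns Hx Hy.
  destruct (x 0) as [f|] eqn:Hx0; [|destruct (y 0) as [f|] eqn:Hy0].
  - apply (differ_of_not_nearOm1 _ _ (threshold nu f)).
    apply (children_far nu x y f); auto.
  - assert (Hns' : ~ same_move y x).
    { intros [H0 _]. apply Hns. split; [congruence|]. intros m Hm. rewrite Hx0 in Hm. discriminate. }
    apply differ_sym, (differ_of_not_nearOm1 _ _ (threshold nu f)).
    apply (children_far nu y x f); auto.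
  - exfalso. apply Hns. split; [congruence|]. intros m Hm. rewrite Hx0 in Hm. discriminate.
Qed.

Lemma runs_differ_upto m : (forall m', m' < m -> targets_differ m') ->
  forall k nu z1 z2, T nu -> bounded_by m z1 -> bounded_by m z2 ->
  (exists j, j < k /\ z1 j <> z2 j) -> differ (run k nu z1) (run k nu z2).
Proof.
  intros Hdiff k. induction k; intros nu z1 z2 Hnu Hb1 Hb2 [j [Hj Hne]]; [lia|].
  simpl. destruct (classic (same_move z1 z2)) as [Hs|Hs].
  - rewrite (child_same_move nu z1 z2 Hs). destruct (child_spec nu z1 Hnu) as [Hc _].
    apply IHk; auto; try (intros i; apply (Hb1 (S i)) || apply (Hb2 (S i))).
    destruct j as [|j]; [destruct Hs; congruence|]. exists j; split; [lia|auto].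
  - apply differ_prefix with (child nu z1) (child nu z2).
    + apply children_differ; auto; intros m' Hm'; apply Hdiff; [apply (Hb1 0)|apply (Hb2 0)]; auto.
    + apply run_spec_all, child_spec; auto.
    + apply run_spec_all, child_spec; auto.
Qed.

Lemma targets_differ_all m : targets_differ m.
Proof.
  induction m as [m IH] using lt_wf_ind.
  intros nu v w Hnu Hv Hw Hne. destruct (omega_child_spec nu Hnu) as [Ho _].
  apply (runs_differ_upto m IH); auto using bounded_of_list_trunc.
  apply NNPP; intro Hno. apply Hne. apply nth_ext with (d := None) (d' := None).
  - rewrite !length_map; lia.
  - intros i Hi. rewrite length_map in Hi. apply NNPP; intro Hn. apply Hno. exists i.
    split; [lia|]. exact Hn.
Qed.

Definition agree (n : nat) (x y : Cantor) : Prop := forall i, i < n -> y i = x i.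

Lemma phi_same_move nu x y i : T nu -> same_move x y -> phi nu y i = phi (child nu x) (shift y) i.
Proof. intros Hnu Hs. rewrite phi_child, (child_same_move nu x y Hs); auto. Qed.

Lemma same_move_of_phi_agree nu x y : T nu ->
  agree (length (child nu x)) (phi nu x) (phi nu y) -> same_move x y.
Proof.
  intros Hnu Hag. apply NNPP; intros Hns.
  destruct (children_differ nu x y Hnu Hns) as [i [Hx [Hy Hne]]];
    try (intros; apply targets_differ_all).
  apply Hne. rewrite <- (phi_entry_child nu x), <- (phi_entry_child nu y) by auto.
  symmetry; apply Hag; auto.
Qed.

Lemma phi_agree_inv n : forall nu x, T nu -> exists K, forall y,
  agree K (phi nu x) (phi nu y) -> agree n x y.
Proof.
  induction n; intros nu x Hnu; [exists 0; intros y _ i Hi; lia|].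
  destruct (child_spec nu x Hnu) as [Hc _].
  destruct (IHn (child nu x) (shift x) Hc) as [K HK].
  exists (K + length (child nu x)). intros y Hy.
  assert (Hs : same_move x y).
  { apply (same_move_of_phi_agree nu); auto. intros i Hi; apply Hy; lia. }
  intros [|i] Hi; [symmetry; apply Hs|].
  apply (HK (shift y)); [|lia].
  intros j Hj. rewrite <- (phi_same_move nu x y j), <- phi_child by auto. apply Hy; lia.
Qed.

Lemma phi_agree d : forall nu x K, T nu -> K <= length nu + d -> exists n, forall y,
  agree n x y -> agree K (phi nu x) (phi nu y).
Proof.
  induction d; intros nu x K Hnu HK.
  - exists 0. intros y _ i Hi. rewrite !(phi_run _ _ 0) by (simpl; auto; lia). reflexivity.
  - destruct (child_spec nu x Hnu) as [Hc [_ Hlc]].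
    destruct (IHd (child nu x) (shift x) K Hc ltac:(lia)) as [n Hn].
    set (m := match x 0 with Some m => m | None => 0 end).
    exists (S (n + m)). intros y Hy i Hi.
    assert (Hs : same_move x y).
    { destruct (x 0) as [k|] eqn:Hx.
      - apply (same_move_of_agree x y k); auto. intros j Hj; apply Hy. subst m; lia.
      - split; [symmetry; apply Hy; lia|]. intros k Hk; congruence. }
    rewrite (phi_same_move nu x y i), (phi_child nu x) by auto. apply Hn; auto.
    intros j Hj. apply (Hy (S j)). lia.
Qed.

Lemma phi_fin_move nu y m i : T nu -> y 0 = Some m ->
  i < length (fin_child nu m (look m y)) -> phi nu y i = entry (fin_child nu m (look m y)) i.
Proof.
  intros Hnu Hy Hi. assert (Hc : child nu y = fin_child nu m (look m y)) by (unfold child_with; rewrite Hy; auto).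
  rewrite phi_entry_child, Hc; auto. rewrite Hc; auto.
Qed.

Lemma phi_omega_move nu x i : T nu -> x 0 = None -> phi nu x i = phi (omega_child nu) (shift x) i.
Proof. intros Hnu Hx. rewrite phi_child by auto. unfold child_with. rewrite Hx. auto. Qed.

Lemma phi_target nu m v i : T nu -> i < length (target nu m v) ->
  phi (omega_child nu) (of_list (map (trunc m) v)) i = entry (target nu m v) i.
Proof. intros Hnu Hi. apply phi_run; auto. apply omega_child_spec; auto. Qed.

Lemma fin_child_near_target nu m v i : T nu -> i < length (target nu m v) ->
  nearOm1 (threshold nu m) (entry (target nu m v) i) (entry (fin_child nu m v) i).
Proof. intros Hnu Hi. destruct (fin_child_spec_all m nu v Hnu) as [_ [_ [_ [_ [_ [_ [_ H]]]]]]]. auto. Qed.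

Lemma same_move_of_near x y f N : x 0 = Some f -> f < N -> nbC x (S f, N) y -> same_move x y.
Proof.
  intros Hx HN Hy.
  assert (Hy0 : y 0 = Some f) by (specialize (Hy 0 ltac:(simpl; lia)); rewrite Hx in Hy; auto).
  split; [congruence|]. intros m Hm. rewrite Hx in Hm. inversion Hm; subst m.
  apply look_ext. intros j Hj. apply (trunc_of_nearOm1 N); [apply Hy; simpl; lia|lia].
Qed.

Lemma same_move_omega x y : x 0 = None -> y 0 = None -> same_move x y.
Proof. intros Hx Hy. split; [congruence|]. intros m Hm; congruence. Qed.

(** Continuity at an [omega] move: a finite move [m] of [y] lands next to [target], which is
    the image of the [m]-truncation of [shift y]. *)
Lemma phi_near_fin_move nu x y m K N n N' : T nu -> x 0 = None -> y 0 = Some m ->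
  K <= m -> N <= m -> n <= m -> N' <= m -> (forall j k, j < n -> x (S j) = Some k -> k < m) ->
  nbC (shift x) (n, N') (shift y) ->
  (forall z, nbC (shift x) (n, N') z ->
     nbC (phi (omega_child nu) (shift x)) (K, N) (phi (omega_child nu) z)) ->
  nbC (phi nu x) (K, N) (phi nu y).
Proof.
  intros Hnu Hx Hy HK HN Hn HN' Hbnd Hxy IH i Hi. simpl in Hi.
  set (v := look m y). set (z := of_list (map (trunc m) v)).
  destruct (length_fin_child nu m v Hnu) as [Hl Hlt]. pose proof (omega_child_spec nu Hnu).
  assert (Hz : nbC (shift x) (n, N') z).
  { intros j Hj. simpl in Hj. unfold z, of_list. rewrite entry_map_trunc. unfold v.
    rewrite entry_look, trunc_idem by lia.
    apply (nearOm1_trunc N' N'); auto. intros k; apply Hbnd; auto. }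
  specialize (IH z Hz i Hi). simpl in IH. unfold z in IH.
  rewrite phi_target in IH by (auto; lia).
  rewrite (phi_omega_move nu x), (phi_fin_move nu y m) by (auto; fold v; lia).
  apply nearOm1_trans with (threshold nu m) (entry (target nu m v) i); auto.
  - simpl. pose proof (lt_threshold nu m); lia.
  - fold v. apply fin_child_near_target; auto; lia.
Qed.

Lemma phi_near d : forall nu x K N, T nu -> K <= length nu + d -> exists n N', forall y,
  nbC x (n, N') y -> nbC (phi nu x) (K, N) (phi nu y).
Proof.
  induction d; intros nu x K N Hnu HK.
  - exists 0, 0. intros y _ i Hi. simpl in Hi.
    rewrite !(phi_run _ _ 0) by (simpl; auto; lia). apply nearOm1_refl.
  - destruct (child_spec nu x Hnu) as [Hc [_ Hlc]].
    destruct (IHd (child nu x) (shift x) K N Hc ltac:(lia)) as [n [N' Hn]].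
    destruct (x 0) as [f|] eqn:Hx.
    + exists (S (n + f)), (S (N' + f)). intros y Hy i Hi.
      assert (Hs : same_move x y).
      { apply (same_move_of_near x y f (S (N' + f))); auto; [lia|].
        intros j Hj; apply Hy; simpl in *; lia. }
      rewrite (phi_same_move nu x y i), (phi_child nu x) by auto. apply Hn; auto.
      intros j Hj. simpl in *. apply nearOm1_mono with (S (N' + f)); [lia|]. apply (Hy (S j)). simpl; lia.
    + set (B := max_val (restr x (S n))).
      exists (S n), (S (N' + N + n + K + B)). intros y Hy.
      destruct (y 0) as [m|] eqn:Hy0.
      * assert (Hm : S (N' + N + n + K + B) <= m).
        { specialize (Hy 0 ltac:(simpl; lia)). rewrite Hx, Hy0 in Hy.
          destruct Hy as [Hy|[h [Hh Hy]]]; [discriminate|]. simpl in Hh; inversion Hy; subst; lia. }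
        apply (phi_near_fin_move nu x y m K N n N'); auto; try lia.
        -- intros j k Hj Hk. enough (k <= B) by lia.
           apply (entry_le_max_val _ (S j)). rewrite entry_restr by lia. auto.
        -- intros j Hj. simpl in *. apply nearOm1_mono with (S (N' + N + n + K + B)); [lia|].
           apply (Hy (S j)). simpl; lia.
        -- replace (omega_child nu) with (child nu x) by (unfold child_with; rewrite Hx; auto). auto.
      * assert (Hs : same_move x y) by (apply same_move_omega; auto).
        intros i Hi. rewrite (phi_same_move nu x y i), (phi_child nu x) by auto. apply Hn; auto.
        intros j Hj. simpl in *. apply nearOm1_mono with (S (N' + N + n + K + B)); [lia|].
        apply (Hy (S j)). simpl; lia.
Qed.

Lemma same_move_of_phi_near nu x y f N : T nu -> x 0 = Some f -> threshold nu f <= N ->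
  nbC (phi nu x) (length (child nu x), N) (phi nu y) -> same_move x y.
Proof.
  intros Hnu Hx HN Hy. apply NNPP; intros Hns.
  destruct (children_far nu x y f N Hnu Hx (targets_differ_all f) Hns HN) as [i [Hi1 [Hi2 Hne]]].
  apply Hne. rewrite <- (phi_entry_child nu x), <- (phi_entry_child nu y) by auto. apply Hy; auto.
Qed.

(** Near an [omega] move, only finite moves [>= M] occur: a move [m < M] reads a value
    [>= threshold nu m] but [< threshold nu M] where [omega_child nu] reads [omega]. *)
Lemma fin_move_large nu x y m M N : T nu -> x 0 = None -> y 0 = Some m -> threshold nu M <= N ->
  nbC (phi nu x) (length (omega_child nu), N) (phi nu y) -> M <= m.
Proof.
  intros Hnu Hx Hy HN Hxy. destruct (Nat.lt_ge_cases m M) as [HmM|]; auto. exfalso.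
  set (v := look m y).
  destruct (fin_child_escape_coord nu m v Hnu) as [d [Hd [Hod [_ [g [Hg _]]]]]].
  destruct (length_fin_child nu m v Hnu) as [Hl _]. pose proof (length_barrier_lt nu).
  pose proof (omega_child_spec nu Hnu) as [Ho _].
  specialize (Hxy d ltac:(simpl; lia)). simpl in Hxy.
  assert (Hc : child nu x = omega_child nu) by (unfold child_with; rewrite Hx; auto).
  rewrite (phi_entry_child nu x), Hc, Hod in Hxy by (rewrite ?Hc; auto; lia).
  rewrite (phi_fin_move nu y m) in Hxy by (auto; fold v; lia). fold v in Hxy. rewrite Hg in Hxy.
  pose proof (max_val_fin_child_lt nu M m v HmM (length_look m y)). apply entry_le_max_val in Hg.
  destruct Hxy as [Hxy|[h [Hh Hxy]]]; [discriminate|]. inversion Hxy; lia.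
Qed.

Lemma phi_near_inv_fin_move nu x y m K N N' n N0 : T nu -> x 0 = None -> y 0 = Some m ->
  K <= m -> n <= m -> N0 <= m -> N' <= N -> (forall j k, j < K -> phi nu x j = Some k -> k < m) ->
  nbC (phi nu x) (K, N) (phi nu y) ->
  (forall z, nbC (phi (omega_child nu) (shift x)) (K, N') (phi (omega_child nu) z) ->
     nbC (shift x) (n, N0) z) ->
  nbC (shift x) (n, N0) (shift y).
Proof.
  intros Hnu Hx Hy HK Hn HN0 HN' Hbnd Hxy IH.
  set (v := look m y). set (z := of_list (map (trunc m) v)).
  destruct (length_fin_child nu m v Hnu) as [Hl Hlt].
  assert (Hz : nbC (phi (omega_child nu) (shift x)) (K, N') (phi (omega_child nu) z)).
  { intros j Hj. simpl in Hj. unfold z. rewrite phi_target, <- phi_omega_move by (auto; lia).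
    apply nearOm1_of_near_common with N (threshold nu m) (entry (fin_child nu m v) j); auto.
    - rewrite <- (phi_fin_move nu y m) by (auto; fold v; lia). apply Hxy; auto.
    - apply fin_child_near_target; auto; lia.
    - intros k Hk. pose proof (lt_threshold nu m). pose proof (Hbnd j k Hj Hk). lia. }
  intros i Hi. simpl in Hi. specialize (IH z Hz i Hi). simpl in IH.
  unfold z, of_list, shift in IH. rewrite entry_map_trunc in IH. unfold v in IH.
  rewrite entry_look, trunc_idem in IH by lia.
  apply nearOm1_of_trunc with m; auto.
Qed.

Lemma phi_near_inv n : forall nu x N0, T nu -> exists K N, forall y,
  nbC (phi nu x) (K, N) (phi nu y) -> nbC x (n, N0) y.
Proof.
  induction n; intros nu x N0 Hnu; [exists 0, 0; intros y _ i Hi; simpl in Hi; lia|].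
  destruct (child_spec nu x Hnu) as [Hc _].
  destruct (IHn (child nu x) (shift x) N0 Hc) as [K [N HK]].
  assert (Hnext : forall y N', N <= N' -> same_move x y ->
            nbC (phi nu x) (K, N') (phi nu y) -> nbC x (S n, N0) y).
  { intros y N' HN' Hs Hy [|i] Hi; simpl in Hi.
    - destruct Hs as [Hs _]. rewrite Hs. apply nearOm1_refl.
    - apply (HK (shift y)); simpl; [|lia].
      intros j Hj. simpl in Hj. rewrite <- (phi_same_move nu x y j), <- phi_child by auto.
      apply nearOm1_mono with N'; auto. }
  destruct (x 0) as [f|] eqn:Hx.
  - exists (K + length (child nu x)), (N + threshold nu f). intros y Hy.
    apply (Hnext y (N + threshold nu f)); [lia| |].
    + apply (same_move_of_phi_near nu x y f (N + threshold nu f)); auto; [lia|].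
      intros j Hj. apply Hy. simpl in *; lia.
    + intros j Hj. apply Hy. simpl in *; lia.
  - assert (Hcx : child nu x = omega_child nu) by (unfold child_with; rewrite Hx; auto).
    rewrite Hcx in HK.
    set (M := S (N0 + n + K + max_val (restr (phi nu x) K))).
    exists (K + length (omega_child nu)), (N + threshold nu M). intros y Hy.
    destruct (y 0) as [m|] eqn:Hy0.
    + assert (HMm : M <= m).
      { apply (fin_move_large nu x y m M (N + threshold nu M)); auto; [lia|].
        intros j Hj. apply Hy. simpl in *; lia. }
      intros [|i] Hi; simpl in Hi.
      * rewrite Hx, Hy0. simpl. right. exists m. split; [lia|auto].
      * apply (phi_near_inv_fin_move nu x y m K (N + threshold nu M) N n N0); auto; try lia.
        -- intros j k Hj Hk. enough (k <= max_val (restr (phi nu x) K)) by lia.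
           apply (entry_le_max_val _ j). rewrite entry_restr; auto.
        -- intros j Hj. apply Hy. simpl in *; lia.
        -- simpl; lia.
    + apply (Hnext y (N + threshold nu M)); [lia|apply same_move_omega; auto|].
      intros j Hj. apply Hy. simpl in *; lia.
Qed.

Lemma phi_inj x y : phi [] x = phi [] y -> x = y.
Proof.
  intros H. apply functional_extensionality. intros i.
  destruct (phi_agree_inv (S i) [] x tree_nil) as [K HK]. symmetry. apply HK; [|lia].
  intros j _. rewrite H; auto.
Qed.

End WideTree.

Definition Pinv (z : Baire) : Cantor := fun n => match z n with 0 => None | S k => Some k end.

Lemma Pinv_P x : Pinv (P x) = x.
Proof. apply functional_extensionality; intros n. unfold Pinv, P. destruct (x n); auto. Qed.

Lemma P_Pinv z : P (Pinv z) = z.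
Proof. apply functional_extensionality; intros n. unfold Pinv, P. destruct (z n); auto. Qed.

Lemma nbB_P x y n : nbB (P x) n (P y) <-> agree n x y.
Proof.
  split; intros H i Hi; specialize (H i Hi); unfold P in *.
  - destruct (x i), (y i); congruence.
  - rewrite H; auto.
Qed.

Lemma embedding_mono {X Y I J : Type} (nbX : X -> I -> X -> Prop) (nbY : Y -> J -> Y -> Prop)
  (A : X -> Prop) (B B' : Y -> Prop) (f : X -> Y) :
  (forall y, B y -> B' y) -> embedding nbX nbY A B f -> embedding nbX nbY A B' f.
Proof. intros HB [Hmap Hrest]. split; auto. Qed.

Section Embeddings.

Variable T : list Om1 -> Prop.
Hypothesis HT : wide_tree T.

Lemma phi_embedding_cantor : embedding nbC nbC (fun _ => True) (lim T) (phi T []).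
Proof.
  split; [|split; [|split]].
  - intros x _. apply phi_lim; auto.
  - intros x y _ _. apply phi_inj; auto.
  - intros x _ [K N].
    destruct (phi_near T HT K [] x K N (tree_nil T HT) ltac:(simpl; lia)) as [n [N' Hn]].
    exists (n, N'). intros y _. apply Hn.
  - intros x _ [n N].
    destruct (phi_near_inv T HT n [] x N (tree_nil T HT)) as [K [N' HK]].
    exists (K, N'). intros y _. apply HK.
Qed.

Lemma phi_embedding_baire :
  embedding nbB nbB (fun _ => True) (imageP (lim T)) (fun z => P (phi T [] (Pinv z))).
Proof.
  split; [|split; [|split]].
  - intros z _. exists (phi T [] (Pinv z)). split; auto. apply phi_lim; auto.
  - intros z1 z2 _ _ H. rewrite <- (P_Pinv z1), <- (P_Pinv z2). f_equal.
    apply (phi_inj T HT). rewrite <- (Pinv_P (phi T [] (Pinv z1))), H. apply Pinv_P.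
  - intros z _ K.
    destruct (phi_agree T HT K [] (Pinv z) K (tree_nil T HT) ltac:(simpl; lia)) as [n Hn].
    exists n. intros z' _ Hz'. apply nbB_P, Hn.
    rewrite <- (P_Pinv z), <- (P_Pinv z') in Hz'. apply nbB_P; auto.
  - intros z _ n.
    destruct (phi_agree_inv T HT n [] (Pinv z) (tree_nil T HT)) as [K HK].
    exists K. intros z' _ Hz'. rewrite <- (P_Pinv z), <- (P_Pinv z').
    apply nbB_P, HK, nbB_P; auto.
Qed.

End Embeddings.

Theorem mainTheorem3 (D : Cantor -> Prop) :
  wide D ->
  exists (phi : Cantor -> Cantor) (psi : Baire -> Baire),
    embedding nbC nbC (fun _ => True) D phi /\
    embedding nbB nbB (fun _ => True) (imageP D) psi /\
    (forall x, psi (P x) = P (phi x)).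
Proof.
  intros [T [HT HD]].
  exists (phi T []), (fun z => P (phi T [] (Pinv z))). split; [|split].
  - apply (embedding_mono _ _ _ (lim T)); [apply HD|apply phi_embedding_cantor; auto].
  - apply (embedding_mono _ _ _ (imageP (lim T))); [|apply phi_embedding_baire; auto].
    intros z [x [Hx Hz]]. exists x. split; auto. apply HD; auto.
  - intros x. rewrite Pinv_P. reflexivity.
Qed.
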